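(* For every $N$-relay FD 1-2-1 network with graph $G=([0:N+1],E)$ and positive rational link capacities as in the context, assuming $\mathcal P\neq\emptyset$, there exists a path $p\in\mathcal P$ with $\mathsf C_p\ge\frac{1}{2N+2}\mathsf{C}_{\rm cs,iid}$, where $\mathsf{C}_{\rm cs,iid}$ is computed with FD states.
   Context: Nodes are $[0:N+1]$; node $0$ is the source, $N+1$ the destination, $[1:N]$ relays. $E\subseteq\{(i,j): i\in[0:N],\ j\in[1:N+1],\ i\ne j\}$ is a set of directed links; each $(i,j)\in E$ has a positive rational capacity $\ell_{j,i}$, and $\ell_{j,i}=0$ for $(i,j)\notin E$. FD network states: a state $s$ consists of sets $s_{i,t}\subseteq[1:N+1]\setminus\{i\}$ and $s_{i,r}\subseteq[0:N]\setminus\{i\}$, each of cardinality at most $1$, for $i\in[0:N+1]$, with $s_{0,r}=s_{N+1,t}=\emptyset$; $\mathcal S$ is the set of all states. Link $(i,j)$ is active in $s$ if $j\in s_{i,t}$ and $i\in s_{j,r}$. $\mathsf{C}_{\rm cs,iid}=\max_{\lambda}\min_{\Omega}\sum_{i\in\Omega,\ j\in\Omega^c}\big(\sum_{s\in\mathcal S:\ (i,j)\text{ active in }s}\lambda_s\big)\ell_{j,i}$, maximum over probability vectors $(\lambda_s)_{s\in\mathcal S}$, minimum over $\Omega$ with $0\in\Omega\subseteq[0:N]$, $\Omega^c=[0:N+1]\setminus\Omega$. $\mathcal P$ is the set of all directed paths of distinct nodes from $0$ to $N+1$ using links of $E$; $\mathsf C_p=\min_{(i,j)\text{ consecutive on }p}\ell_{j,i}$.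 *)

From HB Require Import structures.
From mathcomp Require Import all_boot all_order all_algebra.
Set Implicit Arguments. Unset Strict Implicit. Unset Printing Implicit Defensive.
Import Order.TTheory GRing.Theory Num.Theory.
Local Open Scope ring_scope.

(* Nodes are 'I_N.+2 = [0 : N+1]; node 0 = ord0 (source), node N+1 = ord_max
   (destination). *)
Notation node N := ('I_N.+2).

(* E is a set of directed links (i,j); ell j i is the capacity of link (i,j). *)
Definition valid_links (N : nat) (E : {set node N * node N}) : Prop :=
  forall i j : node N, (i, j) \in E ->
    [/\ i != ord_max, j != ord0 & i != j].

Definition valid_caps (N : nat) (E : {set node N * node N})
    (ell : node N -> node N -> rat) : Prop :=
  forall i j : node N,
    (((i, j) \in E) -> 0 < ell j i) /\ (((i, j) \notin E) -> ell j i = 0).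

(* An FD state: s_{i,t} and s_{i,r}, each a set of cardinality at most 1,
   represented by an option. *)
Definition state (N : nat) : finType :=
  ({ffun node N -> option (node N)} * {ffun node N -> option (node N)})%type.

Definition st N (s : state N) := s.1.
Definition sr N (s : state N) := s.2.

Definition valid_state N (s : state N) : bool :=
  [forall i : node N,
     (st s i != Some i) && (st s i != Some ord0) &&
     (sr s i != Some i) && (sr s i != Some ord_max)]
  && (sr s ord0 == None) && (st s ord_max == None).

Definition active N (s : state N) (i j : node N) : bool :=
  (st s i == Some j) && (sr s j == Some i).

Definition is_prob (R : realFieldType) N (lam : state N -> R) : Prop :=
  [/\ forall s, 0 <= lam s,
      forall s, ~~ valid_state s -> lam s = 0
    & \sum_(s | valid_state s) lam s = 1].

Definition cut_value (R : realFieldType) N (ell : node N -> node N -> rat)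
    (lam : state N -> R) (Om : {set node N}) : R :=
  \sum_(i in Om) \sum_(j in ~: Om)
     (\sum_(s | valid_state s && active s i j) lam s) * ratr (ell j i).

Definition valid_cut N (Om : {set node N}) : bool :=
  (ord0 \in Om) && (ord_max \notin Om).

(* C is C_{cs,iid} = max_lam min_Om cut_value: some lam achieves min >= C,
   and every lam has min <= C. *)
Definition is_Ccsiid (R : realFieldType) N (ell : node N -> node N -> rat)
    (C : R) : Prop :=
  (exists lam, is_prob lam /\
     forall Om, valid_cut Om -> C <= cut_value ell lam Om)
  /\ (forall lam, is_prob lam ->
        exists Om, valid_cut Om /\ cut_value ell lam Om <= C).

Definition is_path N (E : {set node N * node N}) (p : seq (node N)) : bool :=
  [&& head ord_max p == ord0, last ord0 p == ord_max, uniq p &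
      path (fun i j => (i, j) \in E) ord0 (behead p)].

Definition path_link_caps N (ell : node N -> node N -> rat)
    (p : seq (node N)) : seq rat :=
  [seq ell ij.2 ij.1 | ij <- zip p (behead p)].

Definition path_cap N (ell : node N -> node N -> rat) (p : seq (node N)) : rat :=
  let v := path_link_caps ell p in
  \big[Num.min/head 0 v]_(x <- v) x.

From HB Require Import structures.
From mathcomp Require Import all_boot all_order all_algebra.
From mathcomp Require Import lra zify ring.
Set Implicit Arguments. Unset Strict Implicit. Unset Printing Implicit Defensive.
Import Order.TTheory GRing.Theory Num.Theory.
Local Open Scope ring_scope.

(* Take t := C/(2N+2) > 0 and look at the links of capacity at least t. If they
   connect the source to the destination, a loop-free such walk is the wanted
   path. Otherwise the set Om of nodes they reach from the source is a cut all
   of whose crossing links have capacity below t. In every FD state a node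
   transmits on at most one link, so the time shares of the links leaving a
   node sum to at most 1; hence the optimal lam gives Om a cut value of at most
   #|Om| t <= (N+1) t = C/2 < C, a contradiction. *)

Lemma path_mem_zip (T : eqType) (e : rel T) x s a b :
  path e x s -> (a, b) \in zip (x :: s) s -> e a b.
Proof.
elim: s x => //= c s IH x /andP[exc pc]; rewrite inE.
by case/orP => [/eqP[-> ->] // | ab]; apply: IH pc ab.
Qed.

Section PathCapacity.

Variables (R : realFieldType) (N : nat) (ell : node N -> node N -> rat).

(* [s != [::]] matters: without links, [path_cap] is the junk value 0. *)
Lemma path_cap_ge (e : rel (node N)) (t : R) x s :
  (forall a b, e a b -> t <= ratr (ell b a)) -> s != [::] -> path e x s ->
  t <= ratr (path_cap ell (x :: s)).
Proof.
move=> et sn xs.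
have caps_ge y : y \in path_link_caps ell (x :: s) -> t <= ratr y.
  by case/mapP => -[a b] /= ab ->; apply: et; apply: path_mem_zip xs ab.
case: s sn xs caps_ge => [//|c s] _ _ caps_ge; rewrite /path_cap big_seq.
apply: (big_ind (fun y => t <= ratr y)) => [||y /caps_ge //].
- by apply: caps_ge; rewrite mem_head.
- by move=> y z; rewrite /Num.min; case: leP.
Qed.

Variable E : {set node N * node N}.

Lemma is_path_ord0_cons p : is_path E p ->
  [/\ p = ord0 :: behead p, behead p != [::] &
      path (fun i j => (i, j) \in E) ord0 (behead p)].
Proof.
case: p => [|x s] /and4P[/= /eqP x0 sN _ Es]; first by move/(congr1 val): x0.
move: sN; rewrite x0 => sN; split => //.
by case: s {Es} sN => // /eqP/(congr1 val).
Qed.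

Lemma is_path_cap_ge (t : R) p :
  (forall a b, (a, b) \in E -> t <= ratr (ell b a)) -> is_path E p ->
  t <= ratr (path_cap ell p).
Proof.
by move=> Et /is_path_ord0_cons[-> sn Es]; apply: path_cap_ge sn Es.
Qed.

Definition strong_link (t : R) (i j : node N) : bool :=
  ((i, j) \in E) && (t <= ratr (ell j i)).

Lemma connect_strong_link (t : R) :
  connect (strong_link t) ord0 ord_max ->
  exists p, is_path E p /\ t <= ratr (path_cap ell p).
Proof.
case/connectP => q q_path q_last.
move: q_last; case: (shortenP q_path) => s s_path s_uniq _ s_last {q q_path}.
have sn : s != [::] by case: s s_last {s_path s_uniq} => // /eqP/(congr1 val).
exists (ord0 :: s); split; last by apply: path_cap_ge s_path => // a b /andP[].
apply/and4P; split => //=; first by rewrite -s_last.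
by apply: sub_path s_path => a b /andP[].
Qed.

Hypothesis caps : valid_caps E ell.

Lemma not_connect_strong_link (t : R) : 0 <= t ->
  ~~ connect (strong_link t) ord0 ord_max ->
  exists Om, valid_cut Om /\
    forall i j, i \in Om -> j \notin Om -> ratr (ell j i) <= t.
Proof.
move=> t0 not_conn; exists [set j | connect (strong_link t) ord0 j].
split=> [|i j]; first by rewrite /valid_cut !inE connect0.
rewrite !inE => conn_i not_conn_j.
have [ij|ijN] := boolP ((i, j) \in E); last by rewrite (caps i j).2 // rmorph0.
rewrite leNgt; apply: contra not_conn_j => lt_t.
by apply: connect_trans conn_i (connect1 _); rewrite /strong_link ij ltW.
Qed.

End PathCapacity.

Section CutValue.

Variables (R : realFieldType) (N : nat) (lam : state N -> R).
Hypothesis lam_prob : is_prob lam.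

Definition link_share (i j : node N) : R :=
  \sum_(s | valid_state s && active s i j) lam s.

Lemma link_share_ge0 i j : 0 <= link_share i j.
Proof. by case: lam_prob => lam0 _ _; apply: sumr_ge0. Qed.

Lemma sum_link_share_le1 i : \sum_j link_share i j <= 1.
Proof.
case: lam_prob => lam0 _ <-; rewrite /link_share.
under eq_bigr do rewrite big_mkcondr.
rewrite exchange_big /=; apply: ler_sum => s _.
case st_i: (st s i) => [k|]; last by rewrite big1 // => j _; rewrite /active st_i.
rewrite (bigD1 k) //= big1 ?addr0; first by case: ifP.
move=> j jk; case: ifP => //; rewrite /active st_i => /andP[/eqP[kj] _].
by rewrite kj eqxx in jk.
Qed.

Lemma cut_value_le (ell : node N -> node N -> rat) (Om : {set node N}) (t : R) :
  0 <= t -> (forall i j, i \in Om -> j \notin Om -> ratr (ell j i) <= t) ->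
  cut_value ell lam Om <= #|Om|%:R * t.
Proof.
move=> t0 cross_le; rewrite -sum1_card natr_sum mulr_suml.
apply: ler_sum => i iO; rewrite mul1r.
apply: (@le_trans _ _ (\sum_(j in ~: Om) link_share i j * t)).
  apply: ler_sum => j; rewrite inE => jO.
  by apply: ler_wpM2l; [apply: link_share_ge0 | apply: cross_le].
rewrite -mulr_suml ler_piMl //; apply: le_trans (sum_link_share_le1 i).
rewrite [leRHS](bigID (mem (~: Om))) /= lerDl.
by apply: sumr_ge0 => j _; apply: link_share_ge0.
Qed.

End CutValue.

Lemma card_valid_cut N (Om : {set node N}) : valid_cut Om -> (#|Om| <= N.+1)%N.
Proof.
case/andP => _ maxN; have := cardsC Om; rewrite card_ord.
have : (0 < #|~: Om|)%N by apply/card_gt0P; exists ord_max; rewrite inE.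
lia.
Qed.

Theorem lemma3 (R : realFieldType) (N : nat) (E : {set node N * node N})
    (ell : node N -> node N -> rat) (C : R) :
  valid_links E -> valid_caps E ell ->
  (exists p, is_path E p) ->
  is_Ccsiid ell C ->
  exists p, is_path E p /\
    C / (2 * N + 2)%:R <= ratr (path_cap ell p).
Proof.
move=> _ caps [p0 p0_path] [[lam [lam_prob C_le_cut]] _].
have d_gt0 : 0 < (2 * N + 2)%:R :> R by rewrite ltr0n addn2.
have [C_le0 | C_gt0] := lerP C 0.
  exists p0; split => //; apply: (@le_trans _ _ 0).
    by rewrite pmulr_lle0 ?invr_gt0.
  by apply: is_path_cap_ge p0_path => a b ab; rewrite ler0q ltW // (caps a b).1.
set t := C / _; have t_gt0 : 0 < t by rewrite divr_gt0.
have [conn | not_conn] := boolP (connect (strong_link ell E t) ord0 ord_max).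
  exact: connect_strong_link.
have [Om [Om_cut cross_le]] := not_connect_strong_link caps (ltW t_gt0) not_conn.
have : C <= N.+1%:R * t.
  apply: le_trans (C_le_cut _ Om_cut) _.
  apply: le_trans (cut_value_le lam_prob (ltW t_gt0) cross_le) _.
  by rewrite ler_pM2r // ler_nat card_valid_cut.
have -> : N.+1%:R * t = C / 2.
  by rewrite /t natrD natrM; field; rewrite -natrM -natrD pnatr_eq0 addn2.
lra.
Qed.
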